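(* Assume the user paths are pairwise edge-disjoint, and let $a\ge2$ be an integer. Let $E^*$ be an $s$-$t$ path maximizing $\Lambda(\cdot,P)$ over all directed $s$-$t$ paths, with $d$ edges. If $I\ge\lceil\log_ad\rceil$, the Generalized Recursive Greedy algorithm returns an $s$-$t$ path $E_{\mathbf{f}}$ with $\Lambda(E_{\mathbf{f}},P)\ge\frac{1}{\lceil\log_ad\rceil+1}\Lambda(E^*,P)$.
   Context: $G=(V,E)$ is a simple directed acyclic graph with capacities $C\in\mathbb{R}_{\ge0}^E$, $s,t\in V$ joined by a directed path, budget $0<\gamma\le\min_eC(e)$. User paths $P=\{p_1,\dots,p_k\}$ are directed paths (edge sets) with initial values $\lambda_i\ge0$, $\sum_{i:e\in p_i}\lambda_i\le C(e)$. For $A\subseteq E$, $T(A,P)$ is the optimal value of: maximize $\sum_i\tilde\lambda_i$ s.t. $\sum_{i:e\in p_i}\tilde\lambda_i\le C(e)-\gamma\mathbf{1}_{\{e\in A\}}$ for all $e$, $0\le\tilde\lambda_i\le\lambda_i$; $\Lambda(A,P)=\sum_i\lambda_i-T(A,P)$ and $\Lambda_X(A,P)=\Lambda(A\cup X,P)-\Lambda(X,P)$. Generalized Recursive Greedy algorithm with parameter $a$: the procedure $RG(u_1,u_2,X,i)$ lets $S$ be a shortest (fewest edges) directed $u_1$-$u_2$ path, returns ''infeasible'' if none exists, returns $S$ if $i=0$, and otherwise sets $best:=S$, $r:=\Lambda_X(S,P)$ and, for every tuple $(v_1,\dots,v_{a-1})\in V^{a-1}$, computes sequentially $Q_1=RG(u_1,v_1,X,i-1)$,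 $Q_2=RG(v_1,v_2,X\cup Q_1,i-1)$, …, $Q_a=RG(v_{a-1},u_2,X\cup Q_1\cup\dots\cup Q_{a-1},i-1)$ (skipping the tuple if any call is infeasible), and if $\Lambda_X(Q_1\cup\dots\cup Q_a,P)>r$ sets $r$ to this value and $best:=Q_1\cup\dots\cup Q_a$; it returns $best$. The algorithm outputs $RG(s,t,\emptyset,I)$. *)

From HB Require Import structures.
From mathcomp Require Import all_boot all_order all_algebra.
From mathcomp Require Import boolp classical_sets reals.
Set Implicit Arguments. Unset Strict Implicit. Unset Printing Implicit Defensive.
Import Order.TTheory GRing.Theory Num.Theory.
Local Open Scope ring_scope.
Local Open Scope classical_set_scope.

(* A directed path from u to v is given
   by the sequence p of vertices after u: u :: p is a G-path ending in v,
   with no repeated vertex. Its number of edges is size p. *)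
Definition dpath (V : finType) (G : rel V) (u v : V) (p : seq V) : bool :=
  [&& path G u p, last u p == v & uniq (u :: p)].

Definition pedges (V : finType) (u : V) (p : seq V) : {set V * V} :=
  [set e | e \in zip (u :: p) p].

Definition acyclic (V : finType) (G : rel V) : Prop :=
  forall (u : V) (p : seq V), path G u p -> last u p = u -> p = [::].

Definition shortest_path_oracle (V : finType) (G : rel V)
    (sp : V -> V -> option (seq V)) : Prop :=
  forall u v, match sp u v with
              | None => forall p, ~~ dpath G u v p
              | Some p => dpath G u v p /\
                          forall q, dpath G u v q -> (size p <= size q)%N
              end.

Definition feasible (R : realType) (V : finType) (G : rel V) (C : V -> V -> R)
    (gamma : R) (k : nat) (P : 'I_k -> {set V * V}) (lam : 'I_k -> R)
    (A : {set V * V}) (lt : 'I_k -> R) : Prop :=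
  (forall e : V * V, G e.1 e.2 ->
     \sum_(i < k | e \in P i) lt i <= C e.1 e.2 - (if e \in A then gamma else 0))
  /\ (forall i, 0 <= lt i <= lam i).

Definition Tval (R : realType) (V : finType) (G : rel V) (C : V -> V -> R)
    (gamma : R) (k : nat) (P : 'I_k -> {set V * V}) (lam : 'I_k -> R)
    (A : {set V * V}) : R :=
  sup [set \sum_(i < k) lt i | lt in feasible G C gamma P lam A].

Definition Lam (R : realType) (V : finType) (G : rel V) (C : V -> V -> R)
    (gamma : R) (k : nat) (P : 'I_k -> {set V * V}) (lam : 'I_k -> R)
    (A : {set V * V}) : R :=
  \sum_(i < k) lam i - Tval G C gamma P lam A.

Definition LamX (R : realType) (V : finType) (G : rel V) (C : V -> V -> R)
    (gamma : R) (k : nat) (P : 'I_k -> {set V * V}) (lam : 'I_k -> R)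
    (X A : {set V * V}) : R :=
  Lam G C gamma P lam (A :|: X) - Lam G C gamma P lam X.

(* Generalized Recursive Greedy RG(u1,u2,X,i) with parameter a.
   sp: the shortest-path subroutine; ord: the order in which the tuples
   (v_1,...,v_{a-1}) in V^{a-1} are scanned. None = "infeasible". *)
Fixpoint RG (R : realType) (V : finType) (G : rel V) (C : V -> V -> R)
    (gamma : R) (k : nat) (P : 'I_k -> {set V * V}) (lam : 'I_k -> R)
    (a : nat) (sp : V -> V -> option (seq V)) (ord : seq ((a.-1).-tuple V))
    (i : nat) (u1 u2 : V) (X : {set V * V}) {struct i} : option {set V * V} :=
  match sp u1 u2 with
  | None => None
  | Some S0 =>
    let S := pedges u1 S0 in
    match i with
    | 0 => Some S
    | i'.+1 =>
      let fix chain (w : V) (ws : seq V) (Y acc : {set V * V})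
          : option {set V * V} :=
        match ws with
        | [::] => Some acc
        | w' :: ws' =>
          match RG G C gamma P lam sp ord i' w w' Y with
          | None => None
          | Some Q => chain w' ws' (Y :|: Q) (acc :|: Q)
          end
        end in
      let step (br : {set V * V} * R) (vs : (a.-1).-tuple V) :=
        match chain u1 (rcons (tval vs) u2) X finset.set0 with
        | None => br
        | Some Q => if br.2 < LamX G C gamma P lam X Q
                    then (Q, LamX G C gamma P lam X Q) else br
        end in
      Some (foldl step (S, LamX G C gamma P lam X S) ord).1
    end
  end.

From Pilot Require Import Defs.
From HB Require Import structures.
From mathcomp Require Import all_boot all_order all_algebra.
From mathcomp Require Import reals.
From mathcomp Require Import lra zify.
Set Implicit Arguments. Unset Strict Implicit. Unset Printing Implicit Defensive.
Import Order.TTheory GRing.Theory Num.Theory.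
Local Open Scope ring_scope.

(* With edge-disjoint user paths the LP defining T decouples: user i gets
   min(lambda_i, min_{e in p_i, e in A} (C(e) - gamma)), so Lambda is monotone
   and submodular in the attacked edge set, with Lambda(empty) = 0.
   By induction on the level i, RG(u1,u2,X,i) then returns a u1-u2 path Q with
   Lambda_X(O) <= (j+1) Lambda_X(Q) for every u1-u2 path O with at most a^j
   edges, j <= i.  A path with at most one edge is the shortest path, and RG
   never returns anything worse than the shortest path.  Otherwise cut O into
   a pieces of at most a^(j-1) edges; its cut points form one of the tuples RG
   tries, and submodularity adds up the guarantees of the sequential calls on
   the pieces into Lambda_X(O) <= (j+1) Lambda_X(Q_1 u ... u Q_a).
   Take O = E*, X = empty. *)

Section Paths.
Variables (V : finType) (G : rel V).

Lemma acyclic_path_uniq u p : acyclic G -> path G u p -> uniq (u :: p).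
Proof.
move=> G_acyclic; elim: p u => [//|y p IHp] u /= /andP[Guy Gp].
have /= /andP[-> ->] := IHp y Gp; rewrite !andbT; apply/negP => up.
have : path G u (y :: p) by rewrite /= Guy.
case/path.splitP: up => p1 p2; rewrite cat_path => /andP[Gp1 _].
by have := G_acyclic u _ Gp1; rewrite last_rcons => /(_ erefl); case: p1 {Gp1}.
Qed.

Lemma dpathP : acyclic G ->
  forall u v p, dpath G u v p <-> path G u p /\ last u p = v.
Proof.
move=> G_acyclic u v p; split; first by case/and3P => -> /eqP.
by case=> Gp <-; rewrite /dpath Gp eqxx acyclic_path_uniq.
Qed.

Lemma pedges_nil (u : V) : pedges u [::] = set0.
Proof. by apply/setP => e; rewrite !inE. Qed.

Lemma pedges_cat (u : V) p q :
  pedges u (p ++ q) = pedges u p :|: pedges (last u p) q.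
Proof.
apply/setP => e; rewrite !inE.
by elim: p u => [|x p IHp] u //=; rewrite !in_cons IHp orbA.
Qed.

Lemma pedges_edge u p e : path G u p -> e \in pedges u p -> G e.1 e.2.
Proof.
elim: p u => [|x p IHp] u /=; first by rewrite pedges_nil inE.
case/andP=> Gux Gp; rewrite inE in_cons => /orP[/eqP -> //|e_p].
by apply: IHp Gp _; rewrite inE.
Qed.

Fixpoint segments (M : nat) (w : V) (ws : seq V) (ps : seq (seq V)) : Prop :=
  match ws, ps with
  | [::], [::] => True
  | w' :: ws', p :: ps' =>
      [/\ path G w p, last w p = w', (size p <= M)%N & segments M w' ws' ps']
  | _, _ => False
  end.

Fixpoint segments_edges (w : V) (ws : seq V) (ps : seq (seq V)) : {set V * V} :=
  match ws, ps with
  | w' :: ws', p :: ps' => pedges w p :|: segments_edges w' ws' ps'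
  | _, _ => set0
  end.

Lemma path_segments M n u p : path G u p -> (size p <= n.+1 * M)%N ->
  exists vs ps, [/\ size vs = n, segments M u (rcons vs (last u p)) ps
                  & pedges u p = segments_edges u (rcons vs (last u p)) ps].
Proof.
elim: n u p => [|n IHn] u p Gp size_p.
  by exists [::], [:: p]; rewrite /= setU0 -(mul1n M).
have size_p1 : (size (take M p) <= M)%N by rewrite size_take; case: ltnP.
have size_p2 : (size (drop M p) <= n.+1 * M)%N.
  by rewrite size_drop; move: size_p; rewrite mulSn; lia.
rewrite -(cat_take_drop M p) in Gp *.
move: (take M p) (drop M p) size_p1 size_p2 Gp => p1 p2 size_p1 size_p2.
rewrite cat_path => /andP[Gp1 Gp2].
have [vs [ps [size_vs segs Ep2]]] := IHn _ _ Gp2 size_p2.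
exists (last u p1 :: vs), (p1 :: ps).
by rewrite last_cat pedges_cat Ep2 /= size_vs.
Qed.

End Paths.

Section Marginal.
Variables (R : realDomainType) (T : finType) (F : {set T} -> R).

Definition marg (Y A : {set T}) : R := F (A :|: Y) - F Y.

Lemma marg_setU Y A B : marg Y (A :|: B) = marg Y A + marg (A :|: Y) B.
Proof. by rewrite /marg [in RHS]addrC addrA subrK setUCA setUA. Qed.

Hypothesis F_mono : forall A B : {set T}, A \subset B -> F A <= F B.
Hypothesis F_submod : forall A B S : {set T}, A \subset B -> marg B S <= marg A S.

Lemma marg_le_setU Y A B : marg Y B <= marg Y A + marg (A :|: Y) B.
Proof. by rewrite -marg_setU lerD2r F_mono // setSU // subsetUr. Qed.

Lemma marg_subadd Y A B : marg Y (A :|: B) <= marg Y A + marg Y B.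
Proof. by rewrite marg_setU lerD2l F_submod ?subsetUr. Qed.

End Marginal.

Section Chain.
Variables (V : finType) (G : rel V).
Variable rg : V -> V -> {set V * V} -> option {set V * V}.

(* Literally the inner loop of [RG], so that [RG_S] holds by conversion. *)
Definition chain :=
  fix chain (w : V) (ws : seq V) (Y acc : {set V * V}) : option {set V * V} :=
    match ws with
    | [::] => Some acc
    | w' :: ws' =>
      match rg w w' Y with
      | None => None
      | Some Q => chain w' ws' (Y :|: Q) (acc :|: Q)
      end
    end.

Hypothesis rg_path : forall u v Y Q, rg u v Y = Some Q ->
  exists q, [/\ path G u q, last u q = v & Q = pedges u q].

Lemma chain_path ws w Y acc Q : chain w ws Y acc = Some Q ->
  exists q, [/\ path G w q, last w q = last w ws & Q = acc :|: pedges w q].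
Proof.
elim: ws w Y acc => [|w' ws IHws] w Y acc /=.
  by case=> <-; exists [::]; rewrite pedges_nil setU0.
case rgQ: (rg w w' Y) => [Q'|] // /IHws[q2 [Gq2 last_q2 ->]].
have [q1 [Gq1 last_q1 ->]] := rg_path rgQ.
exists (q1 ++ q2); rewrite cat_path last_cat pedges_cat last_q1 Gq1 Gq2.
by rewrite last_q2 setUA.
Qed.

Variables (R : realDomainType) (F : {set V * V} -> R) (M : nat) (c : R).
Hypothesis F_submod : forall A B S : {set V * V}, A \subset B ->
  marg F B S <= marg F A S.
Hypothesis rg_marg : forall u Y p, path G u p -> (size p <= M)%N ->
  exists Q, rg u (last u p) Y = Some Q /\
            marg F Y (pedges u p) <= c * marg F Y Q.

Lemma chain_marg ws w Y acc ps : segments G M w ws ps ->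
  exists Q, chain w ws Y acc = Some (acc :|: Q) /\
            marg F (Q :|: Y) (segments_edges w ws ps) <= c * marg F Y Q.
Proof.
elim: ws w Y acc ps => [|w' ws IHws] w Y acc [|p ps] //=.
  by move=> _; exists set0; rewrite /marg !set0U setU0 !subrr mulr0.
case=> Gp <- size_p segs.
have [Q1 [-> le1]] := rg_marg Y Gp size_p.
have [Q2 [-> le2]] := IHws _ (Y :|: Q1) (acc :|: Q1) _ segs.
exists (Q1 :|: Q2); rewrite setUA; split=> //.
have reassoc : Q2 :|: (Y :|: Q1) = Q1 :|: Q2 :|: Y.
  by rewrite [Y :|: Q1]setUC setUA [Q2 :|: Q1]setUC.
rewrite reassoc [Y :|: Q1]setUC in le2.
rewrite [in X in _ <= X]marg_setU mulrDr.
apply: le_trans (marg_subadd F_submod _ _ _) _.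
by rewrite lerD // (le_trans _ le1) // F_submod // subsetUr.
Qed.

End Chain.

Section Argmax.
Variables (R : realDomainType) (T : eqType) (S : Type).
Variables (val : S -> R) (cand : T -> option S).

Definition argmax_step (br : S * R) (t : T) : S * R :=
  match cand t with
  | None => br
  | Some Q => if br.2 < val Q then (Q, val Q) else br
  end.

Lemma foldl_argmax_inv (Inv : S -> Prop) l br :
  (forall t Q, cand t = Some Q -> Inv Q) -> Inv br.1 ->
  Inv (foldl argmax_step br l).1.
Proof.
move=> cand_Inv; elim: l br => [//|t l IHl] br br_Inv /=; apply: IHl.
rewrite /argmax_step; case cand_t: (cand t) => [Q|//].
by case: ifP => // _; apply: cand_Inv cand_t.
Qed.

Lemma foldl_argmax l Q0 :
  let r := foldl argmax_step (Q0, val Q0) l in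
  [/\ r.2 = val r.1, val Q0 <= r.2
    & forall t Q, t \in l -> cand t = Some Q -> val Q <= r.2].
Proof.
cbv zeta; set br := (Q0, val Q0); have : br.2 = val br.1 by [].
rewrite -[val Q0 <= _]/(br.2 <= _); clearbody br.
elim: l br => [|t l IHl] br br_val //=.
have [step_val le_br_t le_t] : [/\ (argmax_step br t).2 = val (argmax_step br t).1,
    br.2 <= (argmax_step br t).2
  & forall Q, cand t = Some Q -> val Q <= (argmax_step br t).2].
  rewrite /argmax_step; case: (cand t) => [Q|//].
  by case: ltP => [/ltW|] //= le_Q; split=> // Q' [<-].
have [r_val le_r le_l] := IHl _ step_val.
split=> // [|t' Q]; first exact: le_trans le_br_t le_r.
rewrite in_cons => /predU1P[-> /le_t le_Q|t'_l /(le_l _ _ t'_l)//].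
exact: le_trans le_Q le_r.
Qed.

End Argmax.

Section LamClosedForm.
Variables (R : realType) (V : finType) (G : rel V) (C : V -> V -> R) (gamma : R).
Variables (k : nat) (P : 'I_k -> {set V * V}) (lam : 'I_k -> R).
Hypothesis C_ge0 : forall u v, G u v -> 0 <= C u v.
Hypothesis gamma_le_C : forall u v, G u v -> gamma <= C u v.
Hypothesis lam_ge0 : forall i, 0 <= lam i.
Hypothesis lam_feasible : forall e : V * V, G e.1 e.2 ->
  \sum_(i < k | e \in P i) lam i <= C e.1 e.2.
Hypothesis P_disjoint : forall i j, i != j -> [disjoint P i & P j].
Hypothesis P_edge : forall i e, e \in P i -> G e.1 e.2.

Local Notation Lam := (Lam G C gamma P lam).

Definition opt_rate i (A : {set V * V}) : R :=
  \big[Order.min/lam i]_(e in P i :&: A) (C e.1 e.2 - gamma).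

Lemma sum_users_on_edge (f : 'I_k -> R) e i0 : e \in P i0 ->
  \sum_(i < k | e \in P i) f i = f i0.
Proof.
move=> e_i0; rewrite (bigD1 i0) //= big1 ?addr0 // => j /andP[e_j j_i0].
by move: (disjointFr (P_disjoint j_i0) e_j); rewrite e_i0.
Qed.

Lemma opt_rate_feasible A : feasible G C gamma P lam A (opt_rate^~ A).
Proof.
split=> [e Ge | i].
  case: (pickP (fun i => e \in P i)) => [i0 e_i0 | no_user].
    rewrite (sum_users_on_edge _ e_i0); case: ifP => e_A.
      by apply: bigmin_le_cond; rewrite inE e_i0 e_A.
    rewrite subr0 (le_trans (bigmin_le_id _ _ _ _)) //.
    by rewrite -(sum_users_on_edge _ e_i0) lam_feasible.
  rewrite big_pred0 //; case: ifP => _; last by rewrite subr0 C_ge0.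
  by rewrite subr_ge0 gamma_le_C.
rewrite bigmin_le_id andbT le_bigmin // => e.
by rewrite inE subr_ge0 => /andP[/P_edge/gamma_le_C].
Qed.

Lemma feasible_le_opt_rate A lt : feasible G C gamma P lam A lt ->
  forall i, lt i <= opt_rate i A.
Proof.
case=> lt_cap lt_bound i; apply: le_bigmin => [|e]; first by case/andP: (lt_bound i).
rewrite inE => /andP[e_i e_A].
by have := lt_cap e (P_edge e_i); rewrite (sum_users_on_edge _ e_i) e_A.
Qed.

Lemma TvalE A : Tval G C gamma P lam A = \sum_(i < k) opt_rate i A.
Proof.
rewrite /Tval; set S := (X in sup X).
have S_opt : S (\sum_(i < k) opt_rate i A).
  by exists (opt_rate^~ A) => //; apply: opt_rate_feasible.
have S_ub : classical_sets.ubound S (\sum_(i < k) opt_rate i A).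
  by move=> _ [lt lt_feas <-]; apply: ler_sum => i _; apply: feasible_le_opt_rate.
apply/le_anti; rewrite ge_sup //=; last by exists (\sum_(i < k) opt_rate i A).
by apply: ub_le_sup => //; exists (\sum_(i < k) opt_rate i A).
Qed.

Lemma LamE A : Lam A = \sum_(i < k) (lam i - opt_rate i A).
Proof. by rewrite /Defs.Lam TvalE sumrB. Qed.

Lemma opt_rateU i (A B : {set V * V}) :
  opt_rate i (A :|: B) = Order.min (opt_rate i A) (opt_rate i B).
Proof. by rewrite /opt_rate setIUr bigminU. Qed.

Lemma opt_rate_anti i (A B : {set V * V}) :
  A \subset B -> opt_rate i B <= opt_rate i A.
Proof. by move/setUidPr => <-; rewrite opt_rateU ge_min lexx. Qed.

Lemma Lam_mono (A B : {set V * V}) : A \subset B -> Lam A <= Lam B.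
Proof.
by move=> sAB; rewrite !LamE ler_sum // => i _; rewrite lerD2l lerN2 opt_rate_anti.
Qed.

Lemma Lam_submod (A B S : {set V * V}) :
  A \subset B -> marg Lam B S <= marg Lam A S.
Proof.
move=> /(opt_rate_anti) sAB; rewrite /marg !LamE -!sumrB ler_sum // => i _.
rewrite !opt_rateU; have := sAB i.
set a := opt_rate i A; set b := opt_rate i B; set s := opt_rate i S => le_ba.
by case: (leP s a) => ?; case: (leP s b) => ?; lra.
Qed.

Lemma Lam0 : Lam set0 = 0.
Proof. by rewrite LamE big1 // => i _; rewrite /opt_rate setI0 big_set0 subrr. Qed.

End LamClosedForm.

Section RecursiveGreedy.
Variables (R : realType) (V : finType) (G : rel V) (C : V -> V -> R) (gamma : R).
Variables (k : nat) (P : 'I_k -> {set V * V}) (lam : 'I_k -> R).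
Variables (a : nat) (sp : V -> V -> option (seq V)) (ord : seq ((a.-1).-tuple V)).
Hypothesis G_acyclic : acyclic G.
Hypothesis sp_shortest : shortest_path_oracle G sp.
Hypothesis ord_complete : forall vs, vs \in ord.
Hypothesis a_gt1 : (1 < a)%N.

Local Notation F := (Lam G C gamma P lam).
Local Notation RGi := (RG G C gamma P lam sp ord).
Hypothesis F_mono : forall A B : {set V * V}, A \subset B -> F A <= F B.
Hypothesis F_submod : forall A B S : {set V * V}, A \subset B ->
  marg F B S <= marg F A S.

Lemma shortest_path_some u p : path G u p ->
  exists S0, sp u (last u p) = Some S0.
Proof.
move=> Gp; have := sp_shortest u (last u p).
case: (sp u (last u p)) => [S0 _|no_path]; first by exists S0.
by have := no_path p; rewrite (proj2 (dpathP G_acyclic _ _ _) (conj Gp erefl)).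
Qed.

Lemma shortest_path_short u p : path G u p -> (size p <= 1)%N ->
  sp u (last u p) = Some p.
Proof.
move=> Gp size_p; have [S0 spS0] := shortest_path_some Gp; rewrite spS0.
have := sp_shortest u (last u p); rewrite spS0 => -[/and3P[_ /eqP last_S0 _] S0_min].
have size_S0 : (size S0 <= size p)%N by apply/S0_min/(dpathP G_acyclic).
have := acyclic_path_uniq G_acyclic Gp.
case: p size_p size_S0 last_S0 {Gp spS0 S0_min} => [|y [|//]] _;
  case: S0 => [|z [|//]] //= _; first by move=> ->; rewrite inE eqxx.
by move=> ->.
Qed.

Definition RG_candidate i u1 u2 X (vs : (a.-1).-tuple V) :=
  chain (RGi i) u1 (rcons vs u2) X set0.

Lemma RG_S i u1 u2 X : RGi i.+1 u1 u2 X =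
  if sp u1 u2 is Some S0 then
    let S := pedges u1 S0 in
    Some (foldl (argmax_step (marg F X) (RG_candidate i u1 u2 X))
                (S, marg F X S) ord).1
  else None.
Proof. by []. Qed.

Lemma shortest_path_path u1 u2 S0 : sp u1 u2 = Some S0 ->
  path G u1 S0 /\ last u1 S0 = u2.
Proof.
by move=> spS0; have := sp_shortest u1 u2; rewrite spS0 => -[/(dpathP G_acyclic)].
Qed.

Lemma RG_some i u1 u2 X S0 : sp u1 u2 = Some S0 ->
  exists Q, RGi i u1 u2 X = Some Q.
Proof. by case: i => [|i] spS0; rewrite ?RG_S /= spS0; eexists. Qed.

Lemma RG_path i u1 u2 X Q : RGi i u1 u2 X = Some Q ->
  exists q, [/\ path G u1 q, last u1 q = u2 & Q = pedges u1 q].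
Proof.
elim: i u1 u2 X Q => [|i IHi] u1 u2 X Q; rewrite ?RG_S /=;
  case spS0: (sp u1 u2) => [S0|] // [<-];
  have [GS0 last_S0] := shortest_path_path spS0; first by exists S0.
apply: (@foldl_argmax_inv _ _ _ _ _
  (fun Q => exists q, [/\ path G u1 q, last u1 q = u2 & Q = pedges u1 q]));
  last by exists S0.
move=> vs Q' /(chain_path IHi)[q [Gq last_q ->]].
by exists q; rewrite set0U last_q last_rcons.
Qed.

Lemma RG_ge_shortest i u1 u2 X Q S0 :
  RGi i u1 u2 X = Some Q -> sp u1 u2 = Some S0 ->
  marg F X (pedges u1 S0) <= marg F X Q.
Proof.
case: i => [|i]; rewrite ?RG_S /= => + spS0; rewrite spS0 => -[<-] //.
by case: (foldl_argmax (marg F X) (RG_candidate i u1 u2 X) ord (pedges u1 S0)) => <-.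
Qed.

Lemma RG_marg_short i u X p : path G u p -> (size p <= 1)%N ->
  exists Q, RGi i u (last u p) X = Some Q /\
            marg F X (pedges u p) <= marg F X Q.
Proof.
move=> Gp size_p; have sp_p := shortest_path_short Gp size_p.
have [Q RGQ] := RG_some i X sp_p.
by exists Q; split; last exact: RG_ge_shortest RGQ sp_p.
Qed.

Lemma RG_marg i j u X p : (j <= i)%N -> path G u p -> (size p <= a ^ j)%N ->
  exists Q, RGi i u (last u p) X = Some Q /\
            marg F X (pedges u p) <= j.+1%:R * marg F X Q.
Proof.
elim: i j u X p => [|i IHi] [|j] u X p // le_ji Gp size_p.
- have [Q [RGQ le_Q]] := RG_marg_short 0 X Gp size_p.
  by exists Q; split; last rewrite mul1r.
- have [Q [RGQ le_Q]] := RG_marg_short i.+1 X Gp size_p.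
  by exists Q; split; last rewrite mul1r.
have size_p' : (size p <= (a.-1).+1 * a ^ j)%N by rewrite prednK -?expnS // ltnW.
have [vs [ps [size_vs segs ->]]] := path_segments Gp size_p'.
have [Qc [chain_Qc le_Qc]] :=
  chain_marg F_submod (fun u Y p => IHi j u Y p le_ji) X set0 segs.
have [S0 spS0] := shortest_path_some Gp.
rewrite RG_S spS0 /=; eexists; split; first reflexivity.
have [r_val _ le_r] :=
  foldl_argmax (marg F X) (RG_candidate i u (last u p) X) ord (pedges u S0).
have size_vs' : size vs == a.-1 by rewrite size_vs.
have := le_r (Tuple size_vs') _ (ord_complete _) chain_Qc.
rewrite set0U -r_val => le_Qc_r.
apply: le_trans (marg_le_setU F_mono X Qc _) _.
have := ler_wpM2l (ler0n _ j.+1) le_Qc_r.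
by rewrite -natr1 mulrDl mul1r; lra.
Qed.

End RecursiveGreedy.

Theorem theorem4 (R : realType) (V : finType) (G : rel V) (C : V -> V -> R)
    (gamma : R) (s t : V) (k : nat) (P : 'I_k -> {set V * V})
    (lam : 'I_k -> R) (a I : nat) (sp : V -> V -> option (seq V))
    (ord : seq ((a.-1).-tuple V)) (Estar : seq V) (d : nat) :
  (* simple directed acyclic graph with nonnegative capacities *)
  irreflexive G ->
  acyclic G ->
  (forall u v, G u v -> 0 <= C u v) ->
  (* s and t are joined by a directed path *)
  (exists p, dpath G s t p) ->
  (* budget 0 < gamma <= min_e C(e) *)
  0 < gamma ->
  (forall u v, G u v -> gamma <= C u v) ->
  (* user paths are directed paths, with nonnegative feasible initial values *)
  (forall i, exists u v p, dpath G u v p /\ P i = pedges u p) ->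
  (forall i, 0 <= lam i) ->
  (forall e : V * V, G e.1 e.2 -> \sum_(i < k | e \in P i) lam i <= C e.1 e.2) ->
  (* user paths pairwise edge-disjoint *)
  (forall i j, i != j -> [disjoint P i & P j]) ->
  (* integer a >= 2 *)
  (2 <= a)%N ->
  (* implementation choices of the algorithm: any shortest-path routine and
     any scanning order of the tuples of V^{a-1} *)
  shortest_path_oracle G sp ->
  perm_eq ord (enum {: (a.-1).-tuple V}) ->
  (* E^* : an s-t path maximizing Lambda(., P), with d edges *)
  dpath G s t Estar ->
  (forall p, dpath G s t p ->
     Lam G C gamma P lam (pedges s p) <= Lam G C gamma P lam (pedges s Estar)) ->
  d = size Estar ->
  (* I >= ceil(log_a d) *)
  (up_log a d <= I)%N ->
  exists Ef : {set V * V},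
    RG G C gamma P lam sp ord I s t finset.set0 = Some Ef /\
    (exists p, dpath G s t p /\ Ef = pedges s p) /\
    Lam G C gamma P lam Ef >=
      ((up_log a d).+1%:R)^-1 * Lam G C gamma P lam (pedges s Estar).
Proof.
move=> _ G_acyclic C_ge0 _ _ gamma_le_C P_path lam_ge0 lam_feasible P_disjoint
  a_gt1 sp_shortest ord_perm Estar_path _ -> up_log_I.
have P_edge i e : e \in P i -> G e.1 e.2.
  have [u [v [q [/(dpathP G_acyclic)[Gq _] ->]]]] := P_path i.
  exact: pedges_edge.
have ord_complete vs : vs \in ord by rewrite (perm_mem ord_perm) mem_enum.
have Lam_mono := Lam_mono C_ge0 gamma_le_C lam_ge0 lam_feasible P_disjoint P_edge.
have Lam_submod := Lam_submod C_ge0 gamma_le_C lam_ge0 lam_feasible P_disjoint P_edge.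
have Lam0 := Lam0 C_ge0 gamma_le_C lam_ge0 lam_feasible P_disjoint P_edge.
have [GE last_E] := (dpathP G_acyclic _ _ _).1 Estar_path.
have [Q [RGQ le_Q]] := RG_marg G_acyclic sp_shortest ord_complete a_gt1
  Lam_mono Lam_submod set0 up_log_I GE (up_logP _ a_gt1).
rewrite last_E in RGQ; exists Q; split=> //; split.
  have [q [Gq last_q ->]] := RG_path G_acyclic sp_shortest RGQ.
  by exists q; split=> //; apply/(dpathP G_acyclic).
by rewrite /marg !setU0 Lam0 !subr0 in le_Q; rewrite ler_pdivrMl.
Qed.
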